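(* Let $(\alpha_n,\beta_n)_{n\ge1}$ be integers with $8\sum_{k<n}\beta_k<\alpha_n\le\beta_n$ for every $n$ and $\sum_i \frac{\log\beta_i}{2^i}<\infty$. Then for all sufficiently small $\varepsilon>0$, a $B_\varepsilon$-random subset of $\mathbb{Z}^2$ is sparse (with respect to $(\alpha_n,\beta_n)$) with probability $1$.
   Context: Distances on $\mathbb{Z}^2$ are $\ell_\infty$; the diameter of a set is the maximal distance between its elements; the $\beta$-neighborhood of $X$ is the set of points at distance at most $\beta$ from some point of $X$. For $E\subset\mathbb{Z}^2$ and integers $\beta\ge\alpha>0$, a nonempty $X\subset E$ is an $(\alpha,\beta)$-island in $E$ if its diameter is at most $\alpha$ and the $\beta$-neighborhood of $X$ contains no point of $E\setminus X$. Given $(\alpha_i,\beta_i)$ with $\alpha_i\le\beta_i$, the cleaning process sets $E_0=E$ and obtains $E_i$ from $E_{i-1}$ by removing all $(\alpha_i,\beta_i)$-islands of $E_{i-1}$ (the rank $i$ islands); a point is affected at step $i$ if it lies in the $\beta_i$-neighborhood of some rank $i$ island. $E$ is sparse if every point of $E$ is removed at some step and every point of $\mathbb{Z}^2$ is affected at only finitely many steps. $B_\varepsilon$ is the Bernoulli distribution on subsets of $\mathbb{Z}^2$: each point belongs to the set independently with probability $\varepsilon$. *)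

From Stdlib Require Import Reals ZArith List.
Import ListNotations.
Open Scope R_scope.

Definition point := (Z * Z)%type.

Definition dist (x y : point) : Z :=
  Z.max (Z.abs (fst x - fst y)) (Z.abs (snd x - snd y)).

Definition island (a b : Z) (S X : point -> Prop) : Prop :=
  (exists x, X x) /\
  (forall x, X x -> S x) /\
  (forall x y, X x -> X y -> (dist x y <= a)%Z) /\
  (forall x y, X x -> (dist x y <= b)%Z -> S y -> X y).

Definition clean_step (a b : Z) (S : point -> Prop) : point -> Prop :=
  fun p => S p /\ ~ (exists X, island a b S X /\ X p).

(* E_n of the cleaning process; parameters alpha n, beta n used for n >= 1 *)
Fixpoint cleaned (alpha beta : nat -> Z) (E : point -> Prop) (n : nat)
  : point -> Prop :=
  match n with
  | O => E
  | S m => clean_step (alpha (S m)) (beta (S m)) (cleaned alpha beta E m)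
  end.

Definition affected (alpha beta : nat -> Z) (E : point -> Prop) (i : nat)
  (p : point) : Prop :=
  exists X, island (alpha i) (beta i) (cleaned alpha beta E (pred i)) X /\
            exists x, X x /\ (dist x p <= beta i)%Z.

Definition sparse (alpha beta : nat -> Z) (E : point -> Prop) : Prop :=
  (forall p, E p -> exists n, ~ cleaned alpha beta E n p) /\
  (forall p, exists N, forall i, (N < i)%nat -> ~ affected alpha beta E i p).

(* Bernoulli(eps) product measure on {0,1}^(Z^2): cylinder sets and null sets.
   A cylinder is a finite list of distinct points with prescribed values. *)
Definition cylinder := list (point * bool).

Definition in_cyl (c : cylinder) (E : point -> bool) : Prop :=
  forall q : point * bool, In q c -> E (fst q) = snd q.

Definition cyl_prob (eps : R) (c : cylinder) : R :=
  fold_right (fun (q : point * bool) (r : R) => (if snd q then eps else 1 - eps) * r) 1 c.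

Definition valid_cyl (c : cylinder) : Prop := NoDup (map fst c).

Fixpoint psum (f : nat -> R) (m : nat) : R :=
  match m with O => 0 | S k => psum f k + f k end.

(* N is B_eps-null: outer measure zero (coverable by countably many cylinders
   of arbitrarily small total probability). *)
Definition bernoulli_null (eps : R) (N : (point -> bool) -> Prop) : Prop :=
  forall delta, 0 < delta ->
    exists c : nat -> cylinder,
      (forall n, valid_cyl (c n)) /\
      (forall E, N E -> exists n, in_cyl (c n) E) /\
      (forall m, psum (fun n => cyl_prob eps (c n)) m <= delta).

Definition almost_surely (eps : R) (P : (point -> bool) -> Prop) : Prop :=
  bernoulli_null eps (fun E => ~ P E).

Definition Zsum (f : nat -> Z) (a b : nat) : Z :=
  fold_right Z.add 0%Z (map f (seq a (b - a))).

(** A point [x] that survives [k] cleaning steps is certified by a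
    "witness": [2^k] points of [E] obtained by gluing the level-[(k-1)]
    witnesses of [x] and of some point [y] of [E_(k-1)] at distance in
    [(alpha_k / 2, 2 beta_k]] (the ball of radius [alpha_k / 2] around [x]
    would otherwise be an island).  The growth condition makes witnesses
    duplicate-free, so each has probability [eps^(2^k)], and the total
    weight [b_k] of the witnesses of level [k] obeys
    [b_k = box_card (2 beta_k) * b_(k-1)^2], i.e.
    [b_k = exp (2^k (ln eps + P_k))] with a potential [P_k] bounded through
    [sum ln beta_i / 2^i < oo].  For [eps] below a threshold this decays like
    [4^(-k)], which beats the number of points near a fixed [p].  A set that
    is not sparse has a point [p] near which points survive arbitrarily many
    steps, hence it lies in cylinders of arbitrarily small total probability. *)
From Pilot Require Import Defs.
From Stdlib Require Import Reals ZArith List Lia Lra Classical Cantor.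
Import ListNotations.
Open Scope R_scope.
Local Notation dist := Defs.dist.

Lemma dist_sym x y : dist x y = dist y x.
Proof. unfold dist; lia. Qed.

Lemma dist_triangle x y z : (dist x z <= dist x y + dist y z)%Z.
Proof. unfold dist; lia. Qed.

Lemma dist_refl x : dist x x = 0%Z.
Proof. unfold dist; lia. Qed.

(** [box x r] enumerates the closed ball of radius [r] around [x]; it has
    [(2r+1)^2] entries.  Boxes make every union over "nearby points" finite. *)

Definition zrange (r : nat) : list Z :=
  map (fun n => Z.of_nat n - Z.of_nat r)%Z (seq 0 (2 * r + 1)).

Definition box (x : point) (r : nat) : list point :=
  flat_map (fun i => map (fun j => (fst x + i, snd x + j)%Z) (zrange r)) (zrange r).

Lemma in_zrange r z : In z (zrange r) <-> (Z.abs z <= Z.of_nat r)%Z.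
Proof.
  unfold zrange; rewrite in_map_iff; split.
  - intros [n [<- Hn]]; apply in_seq in Hn; lia.
  - intros H; exists (Z.to_nat (z + Z.of_nat r)); split; [lia | apply in_seq; lia].
Qed.

Lemma in_box x y r : In y (box x r) <-> (dist x y <= Z.of_nat r)%Z.
Proof.
  unfold box, dist; rewrite in_flat_map; split.
  - intros [i [Hi Hy]]; apply in_map_iff in Hy; destruct Hy as [j [<- Hj]].
    apply in_zrange in Hi; apply in_zrange in Hj; simpl; lia.
  - intros H; exists (fst y - fst x)%Z; split; [apply in_zrange; lia |].
    apply in_map_iff; exists (snd y - snd x)%Z; split.
    + destruct y; simpl; f_equal; lia.
    + apply in_zrange; lia.
Qed.

Lemma length_flat_map_map {A B C} (g : A -> B -> C) (l : list A) (m : list B) :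
  length (flat_map (fun i => map (g i) m) l) = (length l * length m)%nat.
Proof. induction l; simpl; [reflexivity |]; rewrite length_app, length_map, IHl; lia. Qed.

Lemma box_length x r : length (box x r) = ((2 * r + 1) * (2 * r + 1))%nat.
Proof.
  unfold box; rewrite length_flat_map_map; unfold zrange.
  rewrite length_map, length_seq; reflexivity.
Qed.

(** The basic mechanism of cleaning: if [x] survives a cleaning step with
    parameters [(a,b)], then the ball of radius [a/2] around [x] is not an
    island, hence some point of [S] lies at distance in [(a/2, 2b]] from [x]. *)
Lemma survivor_has_far_neighbour a b (S : point -> Prop) x :
  (0 <= a <= b)%Z -> clean_step a b S x ->
  exists y, S y /\ (a / 2 < dist x y <= 2 * b)%Z.
Proof.
  intros Hab [Hx Hkept].
  set (h := (a / 2)%Z).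
  assert (Hh : (0 <= h /\ 2 * h <= a)%Z)
    by (unfold h; split; [apply Z.div_pos | apply Z.mul_div_le]; lia).
  apply NNPP; intros Hnone; apply Hkept.
  exists (fun z => S z /\ (dist x z <= h)%Z).
  split; [| split; [exact Hx | rewrite dist_refl; lia]].
  split; [exists x; split; [exact Hx | rewrite dist_refl; lia] |].
  split; [intros z [Hz _]; exact Hz |].
  split.
  - intros z1 z2 [_ H1] [_ H2].
    pose proof (dist_triangle z1 x z2); rewrite (dist_sym z1 x) in *; lia.
  - intros z y [_ Hz] Hzy Hy; split; [exact Hy |].
    apply Z.nlt_ge; intros Hfar; apply Hnone; exists y; split; [exact Hy |].
    pose proof (dist_triangle x z y); lia.
Qed.

(** A point surviving [k] steps is certified by a list of [2^k]
    points of [E]: the certificates of [x] and of a far neighbour [y] at the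
    previous level, concatenated.  [witnesses alpha beta k x] lists all such
    candidate certificates; it is finite because [y] ranges over a box. *)
Fixpoint witnesses (alpha beta : nat -> Z) (k : nat) (x : point)
  : list (list point) :=
  match k with
  | O => [[x]]
  | S m =>
      flat_map (fun y =>
          flat_map (fun w1 => map (fun w2 => w1 ++ w2) (witnesses alpha beta m y))
                   (witnesses alpha beta m x))
        (filter (fun y => Z.ltb (alpha (S m) / 2) (dist x y))
                (box x (Z.to_nat (2 * beta (S m)))))
  end.

Lemma survivor_has_witness alpha beta (E : point -> Prop)
  (radii : forall m, (0 <= alpha (S m) <= beta (S m))%Z) :
  forall k x, cleaned alpha beta E k x ->
    exists w, In w (witnesses alpha beta k x) /\ forall z, In z w -> E z.
Proof.
  induction k as [|k IH]; intros x Hx.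
  - exists [x]; split; [left; reflexivity |]; intros z [<- | []]; exact Hx.
  - destruct (survivor_has_far_neighbour _ _ _ _ (radii k) Hx) as [y [Hy Hxy]].
    destruct (IH x (proj1 Hx)) as [w1 [Hw1 E1]], (IH y Hy) as [w2 [Hw2 E2]].
    exists (w1 ++ w2); split.
    + cbn [witnesses]; apply in_flat_map; exists y; split.
      * apply filter_In; split; [apply in_box; lia | apply Z.ltb_lt; lia].
      * apply in_flat_map; exists w1; split; [exact Hw1 | apply in_map, Hw2].
    + intros z Hz; apply in_app_or in Hz; destruct Hz; auto.
Qed.

Fixpoint Ssum (beta : nat -> Z) (k : nat) : Z :=
  match k with O => 0%Z | S m => (Ssum beta m + beta (S m))%Z end.

Lemma Zsum_Ssum beta k : Zsum beta 1 (S k) = Ssum beta k.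
Proof.
  unfold Zsum; replace (S k - 1)%nat with k by lia.
  induction k as [|k IH]; [reflexivity |].
  rewrite seq_S, map_app, fold_right_app; simpl.
  assert (Hc : forall (l : list Z) c,
             fold_right Z.add c l = (fold_right Z.add 0 l + c)%Z)
    by (intros l c; induction l; simpl; lia).
  rewrite Hc, IH; lia.
Qed.

Section Growth.

Variables alpha beta : nat -> Z.

Hypothesis growth : forall m,
  (8 * Ssum beta m < alpha (S m) /\ alpha (S m) <= beta (S m))%Z.

Lemma Ssum_nonneg m : (0 <= Ssum beta m)%Z.
Proof. induction m; simpl; [lia |]; destruct (growth m); lia. Qed.

Lemma radii_ordered m : (1 <= alpha (S m) <= beta (S m))%Z.
Proof. destruct (growth m); pose proof (Ssum_nonneg m); lia. Qed.

(** Witnesses are duplicate-free and stay within distance [2 (beta 1 + ... + beta k)]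
    of their root: the two halves of a witness live in disjoint balls, because
    roots of the halves are more than [alpha (k+1) / 2 >= 4 Ssum k] apart. *)
Lemma witness_shape k x w : In w (witnesses alpha beta k x) ->
  NoDup w /\ forall z, In z w -> (dist x z <= 2 * Ssum beta k)%Z.
Proof.
  revert x w; induction k as [|k IH]; intros x w Hw.
  - destruct Hw as [<- | []]; split; [repeat constructor; auto |].
    intros z [<- | []]; rewrite dist_refl; simpl; lia.
  - cbn [witnesses] in Hw; apply in_flat_map in Hw; destruct Hw as [y [Hy Hw]].
    apply filter_In in Hy; destruct Hy as [Hyb Hy].
    apply in_box in Hyb; apply Z.ltb_lt in Hy.
    apply in_flat_map in Hw; destruct Hw as [w1 [Hw1 Hw]].
    apply in_map_iff in Hw; destruct Hw as [w2 [<- Hw2]].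
    destruct (IH x w1 Hw1) as [N1 D1], (IH y w2 Hw2) as [N2 D2].
    destruct (growth k) as [G1 G2]; pose proof (Ssum_nonneg k).
    assert (Hfar : (4 * Ssum beta k <= alpha (S k) / 2)%Z)
      by (apply Z.div_le_lower_bound; lia).
    split.
    + apply NoDup_app; auto; intros a Ha1 Ha2.
      pose proof (D1 a Ha1); pose proof (D2 a Ha2); pose proof (dist_triangle x a y).
      rewrite (dist_sym a y) in *; lia.
    + intros z Hz; cbn [Ssum]; apply in_app_or in Hz; destruct Hz as [Hz | Hz].
      * pose proof (D1 z Hz); lia.
      * pose proof (D2 z Hz); pose proof (dist_triangle x y z); lia.
Qed.

End Growth.

Definition lsum {A} (f : A -> R) (l : list A) : R :=
  fold_right (fun a r => f a + r) 0 l.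

Lemma lsum_app {A} (f : A -> R) l1 l2 : lsum f (l1 ++ l2) = lsum f l1 + lsum f l2.
Proof. induction l1; simpl; [lra |]; unfold lsum in *; simpl; rewrite IHl1; lra. Qed.

Lemma lsum_flat_map {A B} (f : B -> R) (g : A -> list B) l :
  lsum f (flat_map g l) = lsum (fun a => lsum f (g a)) l.
Proof. induction l; simpl; auto; rewrite lsum_app, IHl; reflexivity. Qed.

Lemma lsum_map {A B} (f : B -> R) (g : A -> B) l :
  lsum f (map g l) = lsum (fun a => f (g a)) l.
Proof. induction l; simpl; auto; unfold lsum in *; simpl; rewrite IHl; auto. Qed.

Lemma lsum_nonneg {A} (f : A -> R) l : (forall a, 0 <= f a) -> 0 <= lsum f l.
Proof. intros H; induction l; unfold lsum in *; simpl; [lra |]; specialize (H a); lra. Qed.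

Lemma lsum_scal {A} (f : A -> R) l c : lsum (fun a => c * f a) l = c * lsum f l.
Proof. induction l; unfold lsum in *; simpl; [lra |]; rewrite IHl; lra. Qed.

Lemma lsum_ext {A} (f g : A -> R) l : (forall a, f a = g a) -> lsum f l = lsum g l.
Proof. intros H; induction l; unfold lsum in *; simpl; [reflexivity |]; rewrite IHl, H; reflexivity. Qed.

Lemma lsum_uniform_bound {A} (f : A -> R) l c :
  (forall a, In a l -> f a <= c) -> lsum f l <= INR (length l) * c.
Proof.
  induction l as [|a l IH]; intros H; [unfold lsum; simpl; lra |].
  change (lsum f (a :: l)) with (f a + lsum f l).
  change (length (a :: l)) with (S (length l)); rewrite S_INR.
  assert (f a <= c) by (apply H; left; auto).
  assert (lsum f l <= INR (length l) * c) by (apply IH; intros; apply H; right; auto).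
  lra.
Qed.

Definition box_card (r : Z) : R := INR ((2 * Z.to_nat r + 1) * (2 * Z.to_nat r + 1)).

Lemma box_card_length x r : INR (length (box x (Z.to_nat r))) = box_card r.
Proof. rewrite box_length; reflexivity. Qed.

(** The weight [w |-> eps^|w|] is multiplicative under concatenation, so it
    factorises over all concatenations of a list from [l1] with one from [l2]. *)
Lemma weight_of_concatenations (eps : R) (l1 l2 : list (list point)) :
  lsum (fun w => eps ^ length w) (flat_map (fun w1 => map (fun w2 => w1 ++ w2) l2) l1)
  = lsum (fun w => eps ^ length w) l1 * lsum (fun w => eps ^ length w) l2.
Proof.
  rewrite lsum_flat_map, Rmult_comm, <- lsum_scal.
  apply lsum_ext; intros w1.
  rewrite lsum_map, Rmult_comm, <- lsum_scal; apply lsum_ext; intros w2.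
  rewrite length_app, pow_add; reflexivity.
Qed.

Fixpoint weight_bound (eps : R) (beta : nat -> Z) (k : nat) : R :=
  match k with
  | O => eps
  | S m => box_card (2 * beta (S m)) * weight_bound eps beta m ^ 2
  end.

Lemma weight_bound_nonneg eps beta k : 0 <= eps -> 0 <= weight_bound eps beta k.
Proof.
  intros H; induction k; simpl; [exact H |].
  apply Rmult_le_pos; [apply pos_INR | nra].
Qed.

(** The total [eps]-weight [sum eps^|w|] of all witnesses of level [k] is at
    most [b_k]: a level-[k+1] witness is a pair of level-[k] witnesses whose
    second root lies in a box of radius [2 beta (k+1)]. *)
Lemma witness_weight alpha beta eps (Heps : 0 <= eps) k x :
  lsum (fun w => eps ^ length w) (witnesses alpha beta k x) <= weight_bound eps beta k.
Proof.
  revert x; induction k as [|k IH]; intros x.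
  - unfold lsum; simpl; lra.
  - cbn [witnesses weight_bound]; rewrite lsum_flat_map.
    set (b := weight_bound eps beta k).
    assert (Hb : 0 <= b) by apply weight_bound_nonneg, Heps.
    eapply Rle_trans.
    { apply lsum_uniform_bound with (c := b * b); intros y _.
      rewrite weight_of_concatenations; apply Rmult_le_compat; auto;
        apply lsum_nonneg; intros; apply pow_le; exact Heps. }
    rewrite <- (box_card_length x), Rmult_comm, (Rmult_comm _ (b ^ 2)); simpl; rewrite Rmult_1_r.
    apply Rmult_le_compat_l; [nra |].
    apply le_INR, filter_length_le.
Qed.

Lemma ln_le_compat x y : 0 < x -> x <= y -> ln x <= ln y.
Proof. intros H [Hlt | <-]; [apply Rlt_le, ln_increasing | apply Rle_refl]; auto. Qed.

Lemma exp_le_compat x y : x <= y -> exp x <= exp y.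
Proof. intros [Hlt | <-]; [apply Rlt_le, exp_increasing | apply Rle_refl]; auto. Qed.

Lemma ln_sqr x : 0 < x -> ln (x ^ 2) = 2 * ln x.
Proof. intros H; rewrite ln_pow by exact H; simpl; lra. Qed.

Lemma psum_nonneg f k : (forall i, 0 <= f i) -> 0 <= psum f k.
Proof. intros H; induction k; simpl; [lra |]; specialize (H k); lra. Qed.

Lemma INR_le_pow2 k : INR k <= 2 ^ k.
Proof.
  induction k; [simpl; lra |]; rewrite S_INR.
  assert (1 <= 2 ^ k) by (apply pow_R1_Rle; lra); simpl; lra.
Qed.

Lemma box_card_pos r : 0 < box_card r.
Proof. unfold box_card; apply lt_0_INR; lia. Qed.

Lemma box_card_le r : (1 <= r)%Z -> box_card r <= 9 * IZR r ^ 2.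
Proof.
  intros Hr; unfold box_card.
  assert (Hn : INR (Z.to_nat r) = IZR r) by (rewrite INR_IZR_INZ, Z2Nat.id by lia; reflexivity).
  rewrite mult_INR, plus_INR, mult_INR, Hn.
  assert (1 <= IZR r) by (apply IZR_le; lia); simpl; nra.
Qed.

(** The logarithmic potential [P_k = sum_(i<k) ln(box_card (2 beta (i+1))) / 2^(i+1)]
    linearises the doubling recursion: [b_k = exp (2^k (ln eps + P_k))]. *)
Definition potential (beta : nat -> Z) (k : nat) : R :=
  psum (fun i => ln (box_card (2 * beta (S i))) / 2 ^ S i) k.

Lemma weight_bound_exp eps beta (Heps : 0 < eps) k :
  weight_bound eps beta k = exp (2 ^ k * (ln eps + potential beta k)).
Proof.
  induction k as [|k IH].
  - unfold potential; simpl; rewrite Rplus_0_r, Rmult_1_l, exp_ln; auto.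
  - cbn [weight_bound]; unfold potential in *; cbn [psum]; rewrite IH.
    pose proof (box_card_pos (2 * beta (S k))).
    assert (0 < 2 ^ k) by (apply pow_lt; lra).
    replace (2 ^ S k * (ln eps + (psum (fun i => ln (box_card (2 * beta (S i))) / 2 ^ S i) k
                                   + ln (box_card (2 * beta (S k))) / 2 ^ S k)))
      with (ln (box_card (2 * beta (S k)))
            + (2 ^ k * (ln eps + psum (fun i => ln (box_card (2 * beta (S i))) / 2 ^ S i) k))
            + (2 ^ k * (ln eps + psum (fun i => ln (box_card (2 * beta (S i))) / 2 ^ S i) k)))
      by (simpl; field; lra).
    rewrite !exp_plus, exp_ln by auto; simpl; lra.
Qed.

(** Smallness threshold for [eps] in terms of the bound [l] on [sum ln beta_i / 2^i]. *)
Definition threshold (l : R) : R := exp (- (ln 36 + ln 4 + 6 * l)).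

Section Decay.

Variable beta : nat -> Z.
Variable l : R.
Hypothesis beta_ge1 : forall k, (1 <= beta (S k))%Z.
Hypothesis log_summable :
  forall k, psum (fun i => ln (IZR (beta (S i))) / 2 ^ S i) k <= l.

Lemma log_terms_nonneg i : 0 <= ln (IZR (beta (S i))) / 2 ^ S i.
Proof.
  apply Rmult_le_pos; [| apply Rlt_le, Rinv_0_lt_compat, pow_lt; lra].
  rewrite <- ln_1; apply ln_le_compat; [lra | apply IZR_le, beta_ge1].
Qed.

Lemma log_beta_bound k : ln (IZR (beta (S k))) <= 2 ^ S k * l.
Proof.
  pose proof (log_summable (S k)) as Hk; cbn [psum] in Hk.
  pose proof (psum_nonneg _ k log_terms_nonneg).
  assert (0 < 2 ^ S k) by (apply pow_lt; lra).
  replace (ln (IZR (beta (S k)))) with (2 ^ S k * (ln (IZR (beta (S k))) / 2 ^ S k))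
    by (field; lra).
  apply Rmult_le_compat_l; lra.
Qed.

(** [P_k <= ln 36 + 2 l], using [box_card (2 beta) <= 36 beta^2]. *)
Lemma potential_bound k : potential beta k <= ln 36 + 2 * l.
Proof.
  assert (Hrefined : potential beta k <= ln 36 * (1 - / 2 ^ k)
            + 2 * psum (fun i => ln (IZR (beta (S i))) / 2 ^ S i) k).
  { induction k as [|k IH]; unfold potential in *; cbn [psum]; [simpl; rewrite Rinv_1; lra |].
    set (B := IZR (beta (S k))).
    assert (HB : 1 <= B) by (apply IZR_le, beta_ge1).
    assert (Hcard : ln (box_card (2 * beta (S k))) <= ln 36 + 2 * ln B).
    { rewrite <- ln_sqr, <- ln_mult by (try apply pow_lt; lra).
      apply ln_le_compat; [apply box_card_pos |].
      eapply Rle_trans; [apply box_card_le; pose proof (beta_ge1 k); lia |].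
      unfold B; rewrite mult_IZR; simpl; lra. }
    assert (0 < 2 ^ k) by (apply pow_lt; lra).
    set (u := / 2 ^ S k).
    assert (Hu : / 2 ^ k = 2 * u) by (unfold u; simpl; field; lra).
    assert (0 < u) by (unfold u; apply Rinv_0_lt_compat, pow_lt; lra).
    unfold Rdiv in *; fold u; fold B; rewrite Hu in IH.
    assert (ln (box_card (2 * beta (S k))) * u <= (ln 36 + 2 * ln B) * u)
      by (apply Rmult_le_compat_r; lra).
    lra. }
  pose proof (log_summable k).
  assert (0 < / 2 ^ k) by (apply Rinv_0_lt_compat, pow_lt; lra).
  assert (0 < ln 36) by (rewrite <- ln_1; apply ln_increasing; lra).
  nra.
Qed.

Lemma witness_weight_decay eps : 0 < eps < threshold l -> forall k,
  box_card (beta (S k)) * weight_bound eps beta k <= 9 * / 4 ^ k.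
Proof.
  intros [Heps Hsmall] k.
  set (B := IZR (beta (S k))).
  assert (HB : 1 <= B) by (apply IZR_le, beta_ge1).
  assert (Hln4 : 0 < ln 4) by (rewrite <- ln_1; apply ln_increasing; lra).
  assert (Hlneps : ln eps < - (ln 36 + ln 4 + 6 * l)).
  { rewrite <- (ln_exp (- _)); apply ln_increasing; auto. }
  assert (Hcard : box_card (beta (S k)) <= 9 * exp (2 ^ k * (4 * l))).
  { eapply Rle_trans; [apply box_card_le, beta_ge1 |].
    replace (IZR (beta (S k)) ^ 2) with (exp (2 * ln B))
      by (rewrite <- ln_sqr, exp_ln by (try apply pow_lt; lra); reflexivity).
    apply Rmult_le_compat_l; [lra | apply exp_le_compat].
    pose proof log_beta_bound k; fold B in H; simpl in H; lra. }
  assert (Hexponent : 2 ^ k * (4 * l + (ln eps + potential beta k)) <= - (INR k * ln 4)).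
  { pose proof (potential_bound k); pose proof (INR_le_pow2 k).
    assert (0 < 2 ^ k) by (apply pow_lt; lra).
    assert (4 * l + (ln eps + potential beta k) <= - ln 4) by lra.
    nra. }
  rewrite weight_bound_exp by exact Heps.
  eapply Rle_trans; [apply Rmult_le_compat_r; [apply Rlt_le, exp_pos | exact Hcard] |].
  rewrite Rmult_assoc, <- exp_plus; apply Rmult_le_compat_l; [lra |].
  replace (/ 4 ^ k) with (exp (- (INR k * ln 4)))
    by (rewrite exp_Ropp, <- ln_pow, exp_ln by (try apply pow_lt; lra); reflexivity).
  apply exp_le_compat; lra.
Qed.

End Decay.

Lemma psum_shift f M : psum f (S M) = f O + psum (fun m => f (S m)) M.
Proof. induction M; simpl in *; [lra |]; rewrite IHM; lra. Qed.

Lemma psum_nth_le {A} (f : A -> R) d l M :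
  (forall a, 0 <= f a) -> (M <= length l)%nat ->
  psum (fun m => f (nth m l d)) M <= lsum f l.
Proof.
  intros Hf; revert M; induction l as [|a l IH]; intros M HM.
  - simpl in HM; replace M with O by lia; simpl; lra.
  - destruct M as [|M]; [apply (lsum_nonneg f (a :: l) Hf) |].
    rewrite psum_shift; simpl in HM; specialize (IH M ltac:(lia)).
    change (lsum f (a :: l)) with (f a + lsum f l); simpl; lra.
Qed.

(** Enumerating a countable union of finite lists.  [concat_prefix L K] is
    [L 0 ++ ... ++ L (K-1)]; when no [L n] is empty its [m]-th entry is
    already determined by the first [m+1] lists, giving a sequence
    [concat_enum L d] that runs through every [L n]. *)
Fixpoint concat_prefix {A} (L : nat -> list A) (K : nat) : list A :=
  match K with O => [] | S k => concat_prefix L k ++ L k end.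

Definition concat_enum {A} (L : nat -> list A) (d : A) (m : nat) : A :=
  nth m (concat_prefix L (S m)) d.

Section ConcatEnum.

Context {A : Type} (L : nat -> list A) (d : A).
Hypothesis nonempty : forall n, L n <> [].

Lemma concat_prefix_extends K K' : (K <= K')%nat ->
  exists t, concat_prefix L K' = concat_prefix L K ++ t.
Proof.
  induction 1 as [|K' _ [t Ht]]; [exists []; rewrite app_nil_r; reflexivity |].
  exists (t ++ L K'); simpl; rewrite Ht, app_assoc; reflexivity.
Qed.

Lemma concat_prefix_length K : (K <= length (concat_prefix L K))%nat.
Proof.
  induction K as [|K IH]; simpl; [lia |]; rewrite length_app.
  specialize (nonempty K); destruct (L K); [congruence | simpl; lia].
Qed.

Lemma concat_prefix_nth K K' j : (j < length (concat_prefix L K))%nat -> (K <= K')%nat ->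
  nth j (concat_prefix L K') d = nth j (concat_prefix L K) d.
Proof.
  intros Hj HK; destruct (concat_prefix_extends K K' HK) as [t ->]; apply app_nth1, Hj.
Qed.

Lemma concat_prefix_in K a : In a (concat_prefix L K) -> exists n, In a (L n).
Proof.
  induction K as [|K IH]; simpl; [tauto |].
  intros H; apply in_app_or in H; destruct H; eauto.
Qed.

Lemma concat_enum_in m : exists n, In (concat_enum L d m) (L n).
Proof.
  apply (concat_prefix_in (S m)), nth_In.
  pose proof (concat_prefix_length (S m)); lia.
Qed.

Lemma concat_enum_onto n a : In a (L n) -> exists m, concat_enum L d m = a.
Proof.
  intros Ha.
  assert (Hin : In a (concat_prefix L (S n))) by (simpl; apply in_or_app; right; exact Ha).
  destruct (In_nth _ _ d Hin) as [j [Hj <-]]; exists j; unfold concat_enum.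
  pose proof (concat_prefix_length (S j)).
  rewrite <- (concat_prefix_nth (S j) (Nat.max (S n) (S j))) by lia.
  apply concat_prefix_nth; [exact Hj | lia].
Qed.

(** The first [M] terms of the sequence are among the first [M] lists. *)
Lemma concat_enum_psum (f : A -> R) M : (forall a, 0 <= f a) ->
  psum (fun m => f (concat_enum L d m)) M <= lsum f (concat_prefix L M).
Proof.
  intros Hf.
  assert (Hsame : forall M', (M' <= M)%nat ->
            psum (fun m => f (concat_enum L d m)) M'
            = psum (fun m => f (nth m (concat_prefix L M) d)) M').
  { induction M' as [|M' IH]; intros HM; simpl; [reflexivity |].
    rewrite IH by lia; unfold concat_enum.
    pose proof (concat_prefix_length (S M')).
    rewrite (concat_prefix_nth (S M') M M') by lia; reflexivity. }
  rewrite Hsame by lia; apply psum_nth_le; [exact Hf | apply concat_prefix_length].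
Qed.

End ConcatEnum.

Lemma concat_prefix_geometric {A} (f : A -> R) (L : nat -> list A) delta :
  (forall n, lsum f (L n) <= delta / 2 ^ S n) ->
  forall K, lsum f (concat_prefix L K) <= delta - delta / 2 ^ K.
Proof.
  intros H K; induction K as [|K IH]; simpl; [unfold lsum; simpl; lra |].
  rewrite lsum_app; specialize (H K).
  assert (delta / (2 * 2 ^ K) = delta / 2 ^ K / 2) by (field; apply pow_nonzero; lra).
  simpl in H; lra.
Qed.

Definition positive_cylinder (w : list point) : cylinder := map (fun z => (z, true)) w.

Lemma positive_cylinder_prob eps w : cyl_prob eps (positive_cylinder w) = eps ^ length w.
Proof. induction w; simpl; auto; unfold cyl_prob in *; simpl; rewrite IHw; reflexivity. Qed.

Lemma positive_cylinder_valid w : NoDup w -> valid_cyl (positive_cylinder w).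
Proof.
  intros H; unfold valid_cyl, positive_cylinder; rewrite map_map; simpl; rewrite map_id; exact H.
Qed.

Lemma positive_cylinder_in w (E : point -> bool) :
  (forall z, In z w -> E z = true) -> in_cyl (positive_cylinder w) E.
Proof.
  intros H q Hq; unfold positive_cylinder in Hq; apply in_map_iff in Hq.
  destruct Hq as [z [<- Hz]]; apply H, Hz.
Qed.

Lemma cyl_prob_nonneg eps (Heps : 0 <= eps <= 1) c : 0 <= cyl_prob eps c.
Proof.
  induction c as [|[q b] c IH]; unfold cyl_prob in *; simpl; [lra |].
  apply Rmult_le_pos; [destruct b; lra | exact IH].
Qed.

(** A valid cylinder of arbitrarily small probability: [m] occupied points on a line. *)
Definition line_cylinder (m : nat) : cylinder :=
  positive_cylinder (map (fun i => (Z.of_nat i, 0%Z)) (seq 0 m)).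

Lemma line_cylinder_valid m : valid_cyl (line_cylinder m).
Proof.
  apply positive_cylinder_valid, NoDup_map_NoDup_ForallPairs; [| apply seq_NoDup].
  intros i j _ _ Hij; injection Hij; lia.
Qed.

Lemma line_cylinder_prob eps m : cyl_prob eps (line_cylinder m) = eps ^ m.
Proof.
  unfold line_cylinder; rewrite positive_cylinder_prob, length_map, length_seq; reflexivity.
Qed.

Lemma line_cylinder_small eps delta K n : 0 < eps <= 1/2 -> (1/2) ^ K < delta ->
  cyl_prob eps (line_cylinder (K + S (S n))) <= delta / 2 ^ S (S n).
Proof.
  intros Heps HK; rewrite line_cylinder_prob.
  assert (Hpos : 0 < / 2 ^ S (S n)) by (apply Rinv_0_lt_compat, pow_lt; lra).
  apply Rle_trans with ((1/2) ^ K * (1/2) ^ S (S n));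
    [rewrite <- pow_add; apply pow_incr; lra |].
  replace ((1/2) ^ S (S n)) with (/ 2 ^ S (S n))
    by (replace (1/2) with (/2) by lra; rewrite pow_inv; reflexivity).
  apply Rmult_le_compat_r; lra.
Qed.

(** The families are padded by one tiny cylinder each (so
    that none is empty) and concatenated into a single sequence. *)
Lemma null_of_summable_covers eps (Heps : 0 < eps <= 1/2) (N : (point -> bool) -> Prop) :
  (forall delta, 0 < delta -> exists L : nat -> list cylinder,
     (forall n c, In c (L n) -> valid_cyl c) /\
     (forall E, N E -> exists n c, In c (L n) /\ in_cyl c E) /\
     (forall n, lsum (cyl_prob eps) (L n) <= delta / 2 ^ S n)) ->
  bernoulli_null eps N.
Proof.
  intros Hcovers delta Hdelta.
  destruct (Hcovers (delta / 2) ltac:(lra)) as [L [Hvalid [Hcover Hsmall]]].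
  destruct (pow_lt_1_zero (1/2) ltac:(rewrite Rabs_pos_eq; lra) delta Hdelta) as [K HK].
  specialize (HK K (le_n K)); rewrite Rabs_pos_eq in HK by (apply pow_le; lra).
  set (L' := fun n => line_cylinder (K + S (S n)) :: L n).
  assert (Hnonempty : forall n, L' n <> []) by (intros n; discriminate).
  assert (Hpadded : forall n, lsum (cyl_prob eps) (L' n) <= delta / 2 ^ S n).
  { intros n; change (lsum _ (L' n)) with
      (cyl_prob eps (line_cylinder (K + S (S n))) + lsum (cyl_prob eps) (L n)).
    pose proof (line_cylinder_small eps delta K n Heps HK); specialize (Hsmall n).
    assert (0 < 2 ^ n) by (apply pow_lt; lra).
    replace (delta / 2 / 2 ^ S n) with (delta / 2 ^ S (S n)) in Hsmall
      by (simpl; field; lra).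
    replace (delta / 2 ^ S n) with (delta / 2 ^ S (S n) + delta / 2 ^ S (S n))
      by (simpl; field; lra).
    lra. }
  exists (concat_enum L' []); split; [| split].
  - intros m; destruct (concat_enum_in L' [] Hnonempty m) as [n [<- | Hin]];
      [apply line_cylinder_valid | exact (Hvalid n _ Hin)].
  - intros E HE; destruct (Hcover E HE) as [n [c [Hin HcE]]].
    destruct (concat_enum_onto L' [] Hnonempty n c (or_intror Hin)) as [m Hm].
    exists m; rewrite Hm; exact HcE.
  - intros M; eapply Rle_trans; [apply concat_enum_psum; auto |].
    + intros c; apply cyl_prob_nonneg; lra.
    + eapply Rle_trans; [apply concat_prefix_geometric, Hpadded |].
      assert (0 < delta / 2 ^ M) by (apply Rdiv_lt_0_compat; [lra | apply pow_lt; lra]).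
      lra.
Qed.

Definition int_of_nat (n : nat) : Z :=
  if Nat.odd n then (- Z.of_nat (Nat.div2 n) - 1)%Z else Z.of_nat (Nat.div2 n).

Lemma int_of_nat_onto z : exists n, int_of_nat n = z.
Proof.
  destruct (Z.le_gt_cases 0 z).
  - exists (2 * Z.to_nat z)%nat; unfold int_of_nat.
    rewrite Nat.odd_even, Nat.div2_double; lia.
  - exists (2 * Z.to_nat (- z - 1) + 1)%nat; unfold int_of_nat.
    rewrite Nat.odd_odd, Nat.div2_odd'; lia.
Qed.

Definition point_of_nat (a : nat) : point :=
  let (u, v) := Cantor.of_nat a in (int_of_nat u, int_of_nat v).

Lemma point_of_nat_onto p : exists a, point_of_nat a = p.
Proof.
  destruct p as [z1 z2].
  destruct (int_of_nat_onto z1) as [n1 <-], (int_of_nat_onto z2) as [n2 <-].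
  exists (Cantor.to_nat (n1, n2)); unfold point_of_nat; rewrite Cantor.cancel_of_to; reflexivity.
Qed.

(** Indeed either [p] is never removed, or it is affected infinitely often. *)
Lemma not_sparse_revisited alpha beta (E : point -> Prop)
  (beta_nonneg : forall k, (0 <= beta (S k))%Z) :
  ~ sparse alpha beta E ->
  exists p, forall N, exists k, (N <= k)%nat /\
    exists x, (dist x p <= beta (S k))%Z /\ cleaned alpha beta E k x.
Proof.
  intros Hns; unfold sparse in Hns; apply not_and_or in Hns.
  destruct Hns as [Hkept | Haffected].
  - apply not_all_ex_not in Hkept; destruct Hkept as [p Hp].
    apply imply_to_and in Hp; destruct Hp as [HpE Hnever].
    exists p; intros N; exists N; split; [lia |]; exists p.
    split; [rewrite dist_refl; apply beta_nonneg |].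
    apply NNPP; intros Hc; apply Hnever; exists N; exact Hc.
  - apply not_all_ex_not in Haffected; destruct Haffected as [p Hp].
    exists p; intros N; apply not_ex_all_not with (n := N) in Hp.
    apply not_all_ex_not in Hp; destruct Hp as [i Hi].
    apply imply_to_and in Hi; destruct Hi as [HNi Hi]; apply NNPP in Hi.
    destruct Hi as [X [HX [x [Hx Hxp]]]].
    destruct i as [|k]; [lia |].
    exists k; split; [lia |]; exists x; split; [exact Hxp |].
    exact (proj1 (proj2 HX) x Hx).
Qed.

(** For a threshold index [K], the [n]-th family collects, for every
    point [p_a] with [a <= n], the positive cylinders of all witnesses of level
    [k = n + 2 + K] rooted within distance [beta (k+1)] of [p_a]. *)
Section Covers.

Variables alpha beta : nat -> Z.
Hypothesis growth : forall m,
  (8 * Ssum beta m < alpha (S m) /\ alpha (S m) <= beta (S m))%Z.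

Definition cover_at (K a j : nat) : list cylinder :=
  let k := (a + 2 + K + j)%nat in
  flat_map (fun x => map positive_cylinder (witnesses alpha beta k x))
           (box (point_of_nat a) (Z.to_nat (beta (S k)))).

Definition cover (K n : nat) : list cylinder :=
  flat_map (fun a => cover_at K a (n - a)) (seq 0 (S n)).

Lemma cover_valid K n c : In c (cover K n) -> valid_cyl c.
Proof.
  unfold cover, cover_at; intros Hc.
  apply in_flat_map in Hc; destruct Hc as [a [_ Hc]].
  apply in_flat_map in Hc; destruct Hc as [x [_ Hc]].
  apply in_map_iff in Hc; destruct Hc as [w [<- Hw]].
  apply positive_cylinder_valid, (witness_shape alpha beta growth _ _ _ Hw).
Qed.

Lemma cover_catches K (E : point -> bool) :
  ~ sparse alpha beta (fun p => E p = true) ->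
  exists n c, In c (cover K n) /\ in_cyl c E.
Proof.
  intros Hns.
  assert (Hbeta : forall k, (1 <= alpha (S k) <= beta (S k))%Z) by apply radii_ordered, growth.
  destruct (not_sparse_revisited alpha beta _ ltac:(intros k; specialize (Hbeta k); lia) Hns)
    as [p Hp].
  destruct (point_of_nat_onto p) as [a <-].
  destruct (Hp (a + 2 + K)%nat) as [k [Hk [x [Hxp Hx]]]].
  destruct (survivor_has_witness alpha beta _
              ltac:(intros m; specialize (Hbeta m); lia) k x Hx) as [w [Hw HwE]].
  exists (a + (k - (a + 2 + K)))%nat, (positive_cylinder w); split.
  - unfold cover; apply in_flat_map; exists a; split; [apply in_seq; lia |].
    unfold cover_at; replace (a + 2 + K + (a + (k - (a + 2 + K)) - a))%nat with k by lia.
    apply in_flat_map; exists x; split; [| apply in_map, Hw].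
    apply in_box; rewrite dist_sym; specialize (Hbeta k); lia.
  - apply positive_cylinder_in, HwE.
Qed.

Lemma counting_vs_geometric n : INR (S n) * / 4 ^ (n + 2) <= / 2 ^ S n.
Proof.
  set (t := 2 ^ S n).
  assert (Ht : 0 < t) by (apply pow_lt; lra).
  assert (Hn : INR (S n) / t <= 1)
    by (unfold Rdiv; apply Rmult_le_reg_r with t; [exact Ht |];
        rewrite Rmult_assoc, Rinv_l, Rmult_1_r, Rmult_1_l by lra; apply INR_le_pow2).
  replace (INR (S n) * / 4 ^ (n + 2)) with (INR (S n) / t * (/ t * / 4)).
  - assert (0 < / t) by (apply Rinv_0_lt_compat, Ht).
    assert (0 <= INR (S n) / t) by (apply Rmult_le_pos; [apply pos_INR | lra]).
    nra.
  - assert (H4 : 4 ^ (n + 2) = t * t * 4).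
    { unfold t; rewrite <- Rpow_mult_distr; replace (n + 2)%nat with (S (S n)) by lia.
      replace (2 * 2) with 4 by lra; simpl; ring. }
    rewrite H4; field; lra.
Qed.

Lemma cover_prob eps K (Heps : 0 <= eps)
  (decay : forall k, box_card (beta (S k)) * weight_bound eps beta k <= 9 * / 4 ^ k) n :
  lsum (cyl_prob eps) (cover K n) <= 9 * (/ 4) ^ K * / 2 ^ S n.
Proof.
  unfold cover; rewrite lsum_flat_map.
  eapply Rle_trans.
  { apply lsum_uniform_bound with (c := 9 * (/ 4) ^ K * / 4 ^ (n + 2)).
    intros a Ha; apply in_seq in Ha; unfold cover_at.
    replace (a + 2 + K + (n - a))%nat with (n + 2 + K)%nat by lia.
    rewrite lsum_flat_map; eapply Rle_trans.
    { apply lsum_uniform_bound with (c := weight_bound eps beta (n + 2 + K)).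
      intros x _; rewrite lsum_map.
      rewrite (lsum_ext _ (fun w => eps ^ length w)) by (intros; apply positive_cylinder_prob).
      apply witness_weight, Heps. }
    rewrite box_card_length; eapply Rle_trans; [apply decay |].
    rewrite pow_add, Rinv_mult, pow_inv; lra. }
  rewrite length_seq.
  pose proof (counting_vs_geometric n).
  assert (0 <= 9 * (/ 4) ^ K) by (apply Rmult_le_pos; [lra | apply pow_le; lra]).
  replace (INR (S n) * (9 * (/ 4) ^ K * / 4 ^ (n + 2)))
    with (9 * (/ 4) ^ K * (INR (S n) * / 4 ^ (n + 2))) by ring.
  apply Rmult_le_compat_l; assumption.
Qed.

End Covers.

Lemma growth_of_hypothesis (alpha beta : nat -> Z)
  (hab : forall n, (1 <= n)%nat ->
     (8 * Zsum beta 1 n < alpha n)%Z /\ (alpha n <= beta n)%Z) :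
  forall m, (8 * Ssum beta m < alpha (S m) /\ alpha (S m) <= beta (S m))%Z.
Proof. intros m; rewrite <- Zsum_Ssum; apply hab; lia. Qed.

Lemma psum_le_limit f l : (forall i, 0 <= f i) -> infinite_sum f l ->
  forall k, psum f k <= l.
Proof.
  intros Hf Hl k.
  assert (Hpartial : forall m, psum f (S m) = sum_f_R0 f m)
    by (intros m; induction m as [|m IH]; simpl in *; [lra | rewrite IH; reflexivity]).
  apply Rle_trans with (psum f (S k)); [simpl; specialize (Hf k); lra |].
  rewrite Hpartial; apply growing_ineq; [| exact Hl].
  intros n; simpl; specialize (Hf (S n)); lra.
Qed.

Lemma threshold_range l : 0 <= l -> 0 < threshold l <= / 4.
Proof.
  intros Hl; split; [apply exp_pos |].
  assert (0 < ln 36) by (rewrite <- ln_1; apply ln_increasing; lra).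
  rewrite <- (exp_ln 4), <- exp_Ropp by lra.
  apply exp_le_compat; lra.
Qed.

Lemma geometric_below delta : 0 < delta -> exists K, 9 * (/ 4) ^ K < delta.
Proof.
  intros Hd.
  destruct (pow_lt_1_zero (/ 4) ltac:(rewrite Rabs_pos_eq; lra) (delta / 9) ltac:(lra)) as [K HK].
  exists K; specialize (HK K (le_n K)).
  rewrite Rabs_pos_eq in HK by (apply pow_le; lra); lra.
Qed.

Theorem lemma1 (alpha beta : nat -> Z)
  (hab : forall n, (1 <= n)%nat ->
     (8 * Zsum beta 1 n < alpha n)%Z /\ (alpha n <= beta n)%Z)
  (hsum : exists l, infinite_sum
            (fun i => ln (IZR (beta (S i))) / 2 ^ (S i)) l) :
  exists eps0, 0 < eps0 <= 1 /\
    forall eps, 0 < eps < eps0 ->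
      almost_surely eps
        (fun E => sparse alpha beta (fun p => E p = true)).
Proof.
  destruct hsum as [l Hl].
  pose proof (growth_of_hypothesis alpha beta hab) as growth.
  assert (beta_ge1 : forall k, (1 <= beta (S k))%Z)
    by (intros k; pose proof (radii_ordered alpha beta growth k); lia).
  assert (log_summable : forall k, psum (fun i => ln (IZR (beta (S i))) / 2 ^ S i) k <= l)
    by (apply psum_le_limit; [apply log_terms_nonneg, beta_ge1 | exact Hl]).
  assert (Hrange : 0 < threshold l <= / 4)
    by (apply threshold_range, (log_summable O)).
  exists (threshold l); split; [lra |]; intros eps Heps.
  apply null_of_summable_covers; [lra |]; intros delta Hdelta.
  destruct (geometric_below delta Hdelta) as [K HK].
  exists (cover alpha beta K); split; [| split].
  - apply cover_valid, growth.
  - intros E; apply cover_catches, growth.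
  - intros n; eapply Rle_trans.
    + apply cover_prob; [lra |].
      apply (witness_weight_decay beta l beta_ge1 log_summable), Heps.
    + apply Rmult_le_compat_r; [apply Rlt_le, Rinv_0_lt_compat, pow_lt |]; lra.
Qed.
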